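(* Let $G=K(n_1,\dots,n_s)$ be a complete $s$-partite graph ($s\ge 2$) with parts $V_1,\dots,V_s$, $|V_j|=n_j$. Let $j\in\{1,\dots,s\}$ with $n_j\ge 2$. Then there is an optimal $1$-relaxed coloring $f$ of $G$ (one using $\chi_1(G)$ colors) such that all vertices of $V_j$ receive the same color, i.e. $|f(V_j)|=1$.
   Context: A map $f$ from $V(G)$ to a finite set of colors is a $t$-relaxed coloring if every vertex $u$ has at most $t$ neighbors $v$ with $f(v)=f(u)$; $\chi_t(G)$ is the minimum number of colors in a $t$-relaxed coloring of $G$, and a $t$-relaxed coloring using $\chi_t(G)$ colors is called optimal. $f(S)$ denotes the set of colors used on $S$. *)

From mathcomp Require Import all_boot all_order.
Set Implicit Arguments. Unset Strict Implicit. Unset Printing Implicit Defensive.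

Section Relaxed.
Variable T : finType.

(* Simple graph given by an adjacency relation e; v is a neighbour of u iff
   v != u and e u v. *)
Definition relaxed_coloring (t : nat) (e : rel T) (k : nat) (f : {ffun T -> 'I_k}) : bool :=
  [forall u, #|[set v | (v != u) && e u v && (f v == f u)]| <= t].

Lemma relaxed_exists (t : nat) (e : rel T) :
  exists k, [exists f : {ffun T -> 'I_k}, relaxed_coloring t e f].
Proof.
exists #|T|; apply/existsP; exists [ffun x => enum_rank x].
apply/forallP => u.
suff -> : [set v | (v != u) && e u v && ([ffun x => enum_rank x] v == [ffun x => enum_rank x] u)] = set0
  by rewrite cards0.
apply/setP => v; rewrite !inE !ffunE.
case: (boolP (enum_rank v == enum_rank u)) => [/eqP/enum_rank_inj ->|_]; first by rewrite eqxx.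
by rewrite andbF.
Qed.

Definition chi (t : nat) (e : rel T) : nat := ex_minn (relaxed_exists t e).

End Relaxed.

(* The complete multipartite graph K(n_1,...,n_s): vertex (i, a) lies in part V_i. *)
Definition kvert (s : nat) (n : 'I_s -> nat) : finType := {i : 'I_s & 'I_(n i)}.

Definition kmulti_rel (s : nat) (n : 'I_s -> nat) : rel (kvert n) :=
  fun x y => tag x != tag y.

Definition kpart (s : nat) (n : 'I_s -> nat) (j : 'I_s) : {set kvert n} :=
  [set x | tag x == j].

(* Take an optimal 1-relaxed coloring f of G.  If V_j is not monochromatic, it
   contains vertices x, y with colors c != d.  Every vertex of V_j is adjacent
   to every vertex outside V_j, so outside V_j at most one vertex has color c
   and at most one has color d.  Recolor all of V_j with c, and every vertex
   outside V_j of color c with d: the class of c becomes the independent set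
   V_j, the class of d outside V_j has at most two vertices, and every other
   color class only shrinks. *)
From mathcomp Require Import all_boot.

Set Implicit Arguments.
Unset Strict Implicit.
Unset Printing Implicit Defensive.

Lemma imset_const_in (aT rT : finType) (h : aT -> rT) (A : {set aT}) a c :
  a \in A -> {in A, forall v, h v = c} -> h @: A = [set c].
Proof.
move=> aA hA; apply/setP => w; rewrite inE.
apply/imsetP/eqP => [[v vA ->]|->]; first exact: hA.
by exists a; rewrite ?hA.
Qed.

Definition same_color_nbrs (T : finType) (e : rel T) k (f : {ffun T -> 'I_k}) u :
    {set T} :=
  [set v | (v != u) && e u v && (f v == f u)].

Lemma relaxed_coloringP (T : finType) t (e : rel T) k (f : {ffun T -> 'I_k}) :
  reflect (forall u, #|same_color_nbrs e f u| <= t) (relaxed_coloring t e f).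
Proof. exact: forallP. Qed.

Section MergeColorsOnPart.

Variables (T : finType) (e : rel T) (V : {set T}).
Hypothesis indepV : {in V &, forall u v, ~~ e u v}.
Hypothesis joinV : forall u v, u \in V -> v \notin V -> e u v.

Variables (k : nat) (f : {ffun T -> 'I_k}).
Hypothesis f_relaxed : relaxed_coloring 1 e f.

Let card_f_nbrs u : #|same_color_nbrs e f u| <= 1.
Proof. by move/relaxed_coloringP: f_relaxed. Qed.

Lemma card_outside_color_le1 z :
  z \in V -> #|[set v in ~: V | f v == f z]| <= 1.
Proof.
move=> zV; apply: leq_trans (card_f_nbrs z).
apply/subset_leq_card/subsetP => v; rewrite !inE => /andP[vV fvz].
rewrite joinV // fvz !andbT; apply: contraNneq vV => ->; exact: zV.
Qed.

Variables x y : T.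
Hypotheses (xV : x \in V) (yV : y \in V) (fxy : f x != f y).

Definition merge_recolor : {ffun T -> 'I_k} :=
  [ffun v => if v \in V then f x else if f v == f x then f y else f v].

Lemma merge_recolor_in v : v \in V -> merge_recolor v = f x.
Proof. by move=> vV; rewrite ffunE vV. Qed.

Lemma merge_recolor_out v :
  v \notin V -> merge_recolor v = if f v == f x then f y else f v.
Proof. by move=> vV; rewrite ffunE (negbTE vV). Qed.

Lemma merge_recolor_eq_fx v : (merge_recolor v == f x) = (v \in V).
Proof.
case: (boolP (v \in V)) => [vV|vV]; first by rewrite merge_recolor_in ?eqxx.
rewrite merge_recolor_out //; case: ifP => [_|/negbT //].
by rewrite eq_sym (negbTE fxy).
Qed.

Lemma same_color_nbrs_merge_in u :
  u \in V -> same_color_nbrs e merge_recolor u = set0.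
Proof.
move=> uV; apply/setP => v; rewrite !inE (merge_recolor_in uV) merge_recolor_eq_fx.
by case: (boolP (v \in V)) => vV; rewrite ?andbF // (negbTE (indepV uV vV)) andbF.
Qed.

Let merged_class := [set v in ~: V | (f v == f x) || (f v == f y)].

Lemma card_merged_class : #|merged_class| <= 2.
Proof.
rewrite (_ : merged_class = [set v in ~: V | f v == f x] :|: [set v in ~: V | f v == f y]).
  apply: leq_trans (leq_card_setU _ _) _.
  by rewrite -[2]/(1 + 1) leq_add // card_outside_color_le1.
by apply/setP => v; rewrite !inE andb_orr.
Qed.

Lemma merge_recolor_eq_fy v : (merge_recolor v == f y) = (v \in merged_class).
Proof.
rewrite !inE; case: (boolP (v \in V)) => vV /=.
  by rewrite merge_recolor_in // (negbTE fxy).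
by rewrite merge_recolor_out //; case: (f v == f x); rewrite ?eqxx.
Qed.

Lemma same_color_nbrs_merge_fy u :
  merge_recolor u = f y -> same_color_nbrs e merge_recolor u \subset merged_class :\ u.
Proof.
move=> gu; apply/subsetP => v; rewrite !inE gu => /andP[/andP[vu _] gv].
by move: gv; rewrite merge_recolor_eq_fy !inE vu.
Qed.

Lemma same_color_nbrs_merge_other u :
  u \notin V -> merge_recolor u != f y ->
  same_color_nbrs e merge_recolor u \subset same_color_nbrs e f u.
Proof.
move=> uV guy; have fux : f u != f x.
  by apply: contraNneq guy => fu; rewrite merge_recolor_out // fu eqxx.
have gu : merge_recolor u = f u by rewrite merge_recolor_out // (negbTE fux).
apply/subsetP => v; rewrite !inE gu => /andP[-> gv] /=.
have vV : v \notin V by rewrite -merge_recolor_eq_fx (eqP gv).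
move: gv; rewrite merge_recolor_out //; case: ifP => // _ /eqP fyu.
by rewrite gu fyu eqxx in guy.
Qed.

Lemma merge_recolor_relaxed : relaxed_coloring 1 e merge_recolor.
Proof.
apply/relaxed_coloringP => u.
case: (boolP (u \in V)) => [uV|uV]; first by rewrite same_color_nbrs_merge_in ?cards0.
case: (eqVneq (merge_recolor u) (f y)) => [gu|guy].
  have uM : u \in merged_class by rewrite -merge_recolor_eq_fy gu.
  apply: leq_trans (subset_leq_card (same_color_nbrs_merge_fy gu)) _.
  by move: card_merged_class; rewrite (cardsD1 u) uM.
apply: leq_trans (card_f_nbrs u).
exact/subset_leq_card/same_color_nbrs_merge_other.
Qed.

Lemma merge_recolor_part : merge_recolor @: V = [set f x].
Proof. exact: imset_const_in xV merge_recolor_in. Qed.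

End MergeColorsOnPart.

Lemma relaxed_coloring_const_on_part (T : finType) (e : rel T) (V : {set T}) k
    (f : {ffun T -> 'I_k}) x :
  {in V &, forall u v, ~~ e u v} -> (forall u v, u \in V -> v \notin V -> e u v) ->
  relaxed_coloring 1 e f -> x \in V ->
  exists g : {ffun T -> 'I_k}, relaxed_coloring 1 e g /\ #|g @: V| = 1.
Proof.
move=> indepV joinV f_relaxed xV.
have [/existsP[y /andP[yV fxy]]|f_const] := boolP [exists y in V, f x != f y].
  exists (merge_recolor V f x y); split; first exact: merge_recolor_relaxed.
  by rewrite merge_recolor_part // cards1.
exists f; split => //; rewrite (imset_const_in (c := f x) xV) ?cards1 // => y yV.
by apply/esym/eqP; apply: contraNT f_const => fxy; apply/existsP; exists y; rewrite yV.
Qed.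

Theorem lemma4p1 (s : nat) (n : 'I_s -> nat) (hs : 2 <= s)
  (hpos : forall i, 0 < n i) (j : 'I_s) (hj : 2 <= n j) :
  exists f : {ffun kvert n -> 'I_(chi 1 (@kmulti_rel s n))},
    relaxed_coloring 1 (@kmulti_rel s n) f /\ #|f @: kpart n j| = 1.
Proof.
rewrite /chi; case: ex_minnP => k /existsP[f f_relaxed] _.
pose x : kvert n := existT (fun i => 'I_(n i)) j (Ordinal (hpos j)).
apply: (relaxed_coloring_const_on_part (x := x)) f_relaxed _; last by rewrite inE.
  by move=> u v; rewrite !inE /kmulti_rel => /eqP-> /eqP->; rewrite eqxx.
by move=> u v; rewrite !inE /kmulti_rel => /eqP->; rewrite eq_sym.
Qed.
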